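(* Let $0\le q<d$ and let $X\subset Y$ be bounded cubical sets in $\mathbb{R}^d$. Then $$|\beta_q(Y)-\beta_q(X)|\le \#Y-\#X.$$
   Context: An elementary interval is $[l,l+1]$ or $[l]=[l,l]$ with $l\in\mathbb{Z}$; an elementary cube in $\mathbb{R}^d$ is a product of $d$ elementary intervals, of dimension equal to the number of nondegenerate factors. A cubical set is a union of elementary cubes. For a cubical set $X$, $\#X$ is the number of elementary cubes (of all dimensions) contained in $X$. $C_k(X)$ is the free $\mathbb{Z}$-module on the $k$-dimensional elementary cubes contained in $X$, with the standard cubical boundary operator $\partial\widehat Q=\sum_{j=1}^k(-1)^{j-1}(\widehat{Q_j^+}-\widehat{Q_j^-})$ ($Q_j^\pm$ obtained by replacing the $j$-th nondegenerate factor $[l_j,l_j+1]$ by $[l_j+1]$, resp. $[l_j]$); $H_k(X)$ is its homology, and for bounded $X$, $\beta_k(X)$ is the rank of the free part of $H_k(X)$. *)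

From HB Require Import structures.
From mathcomp Require Import all_boot all_order all_algebra.
From mathcomp Require Import boolp classical_sets cardinality reals.
From mathcomp Require Import finmap.

Set Implicit Arguments.
Unset Strict Implicit.
Unset Printing Implicit Defensive.

Import Order.TTheory GRing.Theory Num.Theory.
Local Open Scope ring_scope.
Local Open Scope classical_set_scope.

(* An elementary interval is encoded as (l, b) : int * bool;
   b = true means [l, l+1], b = false means [l] = [l,l].
   An elementary cube in R^d is a product of d elementary intervals. *)
Definition cube (d : nat) := {ffun 'I_d -> int * bool}.

Definition cdim (d : nat) (Q : cube d) : nat := #|[set i | (Q i).2]|.

Definition realize (R : realType) (d : nat) (Q : cube d) : set ('I_d -> R) :=
  [set x | forall i : 'I_d,
     if (Q i).2 then ((Q i).1%:~R <= x i) && (x i <= ((Q i).1 + 1)%:~R)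
     else x i == (Q i).1%:~R].

Definition cubical (R : realType) (d : nat) (X : set ('I_d -> R)) : Prop :=
  exists F : set (cube d), X = \bigcup_(Q in F) @realize R d Q.

Definition bounded_set (R : realType) (d : nat) (X : set ('I_d -> R)) : Prop :=
  exists M : R, forall x, X x -> forall i, `|x i| <= M.

Definition cubes_of (R : realType) (d : nat) (X : set ('I_d -> R)) : {fset cube d} :=
  fset_set [set Q : cube d | @realize R d Q `<=` X].

Definition ncubes (R : realType) (d : nat) (X : set ('I_d -> R)) : nat :=
  #|` cubes_of X|%fset.

Definition kcubes (R : realType) (d : nat) (X : set ('I_d -> R)) (k : nat)
  : {fset cube d} :=
  [fset Q in cubes_of X | cdim Q == k]%fset.

Definition face_plus (d : nat) (Q : cube d) (i : 'I_d) : cube d :=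
  [ffun j => if j == i then (((Q i).1 + 1)%R, false) else Q j].
Definition face_minus (d : nat) (Q : cube d) (i : 'I_d) : cube d :=
  [ffun j => if j == i then ((Q i).1, false) else Q j].

(* coefficient of \hat P in the boundary of \hat Q:
   d \hat Q = sum_{j=1}^k (-1)^(j-1) (\hat{Q_j^+} - \hat{Q_j^-}), where the
   j-th nondegenerate factor sits at coordinate i, with j-1 = number of
   nondegenerate coordinates before i. *)
Definition bcoef (d : nat) (Q P : cube d) : int :=
  \sum_(i < d | (Q i).2)
     (-1) ^+ #|[set i' : 'I_d | (i' < i)%N && (Q i').2]|
       * ((P == face_plus Q i)%:R - (P == face_minus Q i)%:R).

(* A k-chain of X is a function c : cube d -> int supported on kcubes X k
   (an element of the free Z-module C_k(X)). *)
Definition is_chain (R : realType) (d : nat) (X : set ('I_d -> R)) (k : nat)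
  (c : cube d -> int) : Prop :=
  forall Q, Q \notin kcubes X k -> c Q = 0.

Definition bd (R : realType) (d : nat) (X : set ('I_d -> R)) (k : nat)
  (c : cube d -> int) : cube d -> int :=
  fun P => \sum_(Q <- kcubes X k) c Q * bcoef Q P.

Definition is_cycle (R : realType) (d : nat) (X : set ('I_d -> R)) (k : nat)
  (c : cube d -> int) : Prop :=
  is_chain X k c /\ forall P, bd X k c P = 0.

Definition is_boundary (R : realType) (d : nat) (X : set ('I_d -> R)) (k : nat)
  (c : cube d -> int) : Prop :=
  exists b : cube d -> int, is_chain X k.+1 b /\ forall P, bd X k.+1 b P = c P.

Definition indep_homology (R : realType) (d : nat) (X : set ('I_d -> R))
  (k r : nat) (v : 'I_r -> cube d -> int) : Prop :=
  (forall i, is_cycle X k (v i)) /\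
  forall a : 'I_r -> int,
    is_boundary X k (fun P => \sum_(i < r) a i * v i P) -> forall i, a i = 0.

(* beta_k(X): rank of the free part of H_k(X), i.e. the maximal number of
   Z-linearly independent elements of H_k(X) (bounded by dim C_k(X)). *)
Definition betti (R : realType) (d : nat) (X : set ('I_d -> R)) (k : nat) : nat :=
  \max_(r < (#|` kcubes X k|%fset).+1 |
          `[< exists v, @indep_homology R d X k r v >]) (r : nat).

(* Adding one elementary cube Q to a finite family of cubes changes the chain
   groups in a single degree. If dim Q = q, the q-cycles grow, and r+1
   independent classes of cycles allowed to use Q yield r classes of cycles
   avoiding Q: subtract from the others suitable multiples of one cycle that
   uses Q. If dim Q = q+1, the q-boundaries grow by the multiples of the
   boundary of Q, which can kill at most one direction of an independent
   family. Either way beta_q moves by at most one, and adding the cubes of Y to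
   those of X one at a time gives the bound. The intermediate families need not
   be closed under faces, and nothing about the incidence numbers [bcoef] is
   used. *)

From mathcomp Require Import all_boot all_order all_algebra.
From mathcomp Require Import boolp classical_sets cardinality reals.
From mathcomp Require Import finmap ring zify.
Import Order.TTheory GRing.Theory Num.Theory.
Set Implicit Arguments.
Unset Strict Implicit.
Unset Printing Implicit Defensive.

Section HomologyRank.
Local Open Scope fset_scope.
Local Open Scope ring_scope.
Variables (T : choiceType) (R : idomainType) (inc : T -> T -> R).
Implicit Types (A B : {fset T}) (c : T -> R).

Definition supported A c := forall Q, Q \notin A -> c Q = 0.
Definition bdry A c (P : T) : R := \sum_(Q <- A) c Q * inc Q P.
Definition cycle_on A c := supported A c /\ forall P, bdry A c P = 0.
Definition boundary_on B c := exists b, supported B b /\ forall P, bdry B b P = c P.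
Definition lincomb r (a : 'I_r -> R) (v : 'I_r -> T -> R) (P : T) : R :=
  \sum_(i < r) a i * v i P.
Definition hindep A B r (v : 'I_r -> T -> R) :=
  (forall i, cycle_on A (v i)) /\
  forall a, boundary_on B (lincomb a v) -> forall i, a i = 0.
Arguments hindep A B r v : clear implicits.

Definition hrank A B : nat :=
  \max_(r < (#|` A|).+1 | `[< exists v, hindep A B r v >]) (r : nat).

Lemma hindep0 A B (v : 'I_0 -> T -> R) : hindep A B 0 v.
Proof. by split=> [[]|a _ []]. Qed.

Lemma hrank_attained A B :
  exists2 v, hindep A B (hrank A B) v & (hrank A B <= #|` A|)%N.
Proof.
rewrite /hrank.
have : (0 < #|[pred r : 'I_(#|` A|).+1 | `[< exists v, hindep A B r v >]]|)%N.
  apply/card_gt0P; exists ord0; rewrite inE; apply/asboolP.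
  by exists (fun _ _ => 0); apply: hindep0.
case/(eq_bigmax_cond (fun r : 'I_(#|` A|).+1 => (r : nat))) => r.
rewrite inE => /asboolP [v indep_v] ->.
by exists v => //; rewrite -ltnS.
Qed.

Lemma hrank_max A B r v : hindep A B r v -> (r <= #|` A|)%N -> (r <= hrank A B)%N.
Proof.
move=> indep_v rA; rewrite -ltnS in rA.
by apply: (@leq_bigmax_cond _ _ _ (Ordinal rA)); apply/asboolP; exists v.
Qed.

Lemma leq_hrankD A1 B1 A2 B2 k :
  (forall r v, (k <= r)%N -> hindep A1 B1 r v -> exists w, hindep A2 B2 (r - k) w) ->
  (#|` A1| <= #|` A2| + k)%N -> (hrank A1 B1 <= hrank A2 B2 + k)%N.
Proof.
move=> shrink cardA; have [v indep_v rA1] := hrank_attained A1 B1.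
have [kr|] := leqP k (hrank A1 B1); last by move/ltnW/leq_trans; apply; rewrite leq_addl.
have [w /hrank_max indep_w] := shrink _ _ kr indep_v.
have := indep_w (leq_trans (leq_sub2r k (leq_trans rA1 cardA)) _); lia.
Qed.

Lemma supported_fsetU1 A Q c : supported A c -> supported (Q |` A) c.
Proof. by move=> sc P; rewrite !inE negb_or => /andP [_ /sc]. Qed.

Lemma supported_fsetU1_vanishing A Q c :
  supported (Q |` A) c -> c Q = 0 -> supported A c.
Proof.
move=> sc cQ P PA; have [->//|PQ] := eqVneq P Q.
by apply: sc; rewrite !inE negb_or PQ.
Qed.

Lemma supported_lin A (x y : R) f g :
  supported A f -> supported A g -> supported A (fun P => x * f P + y * g P).
Proof. by move=> sf sg P PA; rewrite sf ?sg // !mulr0 addr0. Qed.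

Lemma bdry_lin A (x y : R) f g P :
  bdry A (fun Q => x * f Q + y * g Q) P = x * bdry A f P + y * bdry A g P.
Proof.
rewrite /bdry !mulr_sumr -big_split; apply: eq_bigr => Q _.
by rewrite /= mulrDl !mulrA.
Qed.

Lemma bdry_fsetU1 A Q c P :
  Q \notin A -> bdry (Q |` A) c P = c Q * inc Q P + bdry A c P.
Proof. exact: big_fsetU1. Qed.

Lemma cycle_on_lin A (x y : R) f g :
  cycle_on A f -> cycle_on A g -> cycle_on A (fun P => x * f P + y * g P).
Proof.
move=> [sf bf] [sg bg]; split; first exact: supported_lin.
by move=> P; rewrite bdry_lin bf bg !mulr0 addr0.
Qed.

Lemma cycle_on_fsetU1 A Q c : Q \notin A -> cycle_on A c -> cycle_on (Q |` A) c.
Proof.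
move=> QA [sc bc]; split; first exact: supported_fsetU1.
by move=> P; rewrite bdry_fsetU1 // sc // mul0r add0r.
Qed.

Lemma cycle_on_fsetU1_vanishing A Q c :
  Q \notin A -> cycle_on (Q |` A) c -> c Q = 0 -> cycle_on A c.
Proof.
move=> QA [sc bc] cQ; split; first exact: supported_fsetU1_vanishing cQ.
by move=> P; rewrite -(bc P) bdry_fsetU1 // cQ mul0r add0r.
Qed.

Lemma boundary_on_eq B c c' : c =1 c' -> boundary_on B c -> boundary_on B c'.
Proof. by move=> cc' [b [sb bb]]; exists b; split=> // P; rewrite bb. Qed.

Lemma boundary_on_fsetU1 B Q c :
  Q \notin B -> boundary_on B c -> boundary_on (Q |` B) c.
Proof.
move=> QB [b [sb bb]]; exists b; split; first exact: supported_fsetU1.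
by move=> P; rewrite bdry_fsetU1 // sb // mul0r add0r.
Qed.

Lemma boundary_on_fsetU1P B Q c : Q \notin B -> boundary_on (Q |` B) c ->
  exists m b, supported B b /\ forall P, c P = m * inc Q P + bdry B b P.
Proof.
move=> QB [b [sb bb]].
exists (b Q), (fun P => if P == Q then 0 else b P); split.
  by move=> P PB; case: eqP => // /eqP PQ; apply: sb; rewrite !inE negb_or PQ.
move=> P; rewrite -bb bdry_fsetU1 //; congr (_ + _).
by apply: eq_big_seq => P' P'B; case: eqP P'B => // ->; rewrite (negbTE QB).
Qed.

Definition extend r (j : 'I_r.+1) (x : R) (a : 'I_r -> R) (k : 'I_r.+1) : R :=
  if unlift j k is Some i then a i else x.

Lemma extend_id r (j : 'I_r.+1) x a : extend j x a j = x.
Proof. by rewrite /extend unlift_none. Qed.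

Lemma extend_lift r (j : 'I_r.+1) x a i : extend j x a (lift j i) = a i.
Proof. by rewrite /extend liftK. Qed.

Lemma lincomb_extend r (j : 'I_r.+1) x a v P :
  lincomb (extend j x a) v P = x * v j P + lincomb a (fun i => v (lift j i)) P.
Proof.
rewrite /lincomb (bigD1_ord j) //= extend_id.
by congr (_ + _); apply: eq_bigr => i _; rewrite extend_lift.
Qed.

Lemma hindep_drop A B r v (j : 'I_r.+1) :
  hindep A B r.+1 v -> hindep A B r (fun i => v (lift j i)).
Proof.
move=> [cyc_v indep_v]; split=> [i|a bd_a i]; first exact: cyc_v.
rewrite -(extend_lift j 0 a i); apply: indep_v; apply: boundary_on_eq bd_a => P.
by rewrite lincomb_extend mul0r add0r.
Qed.

Lemma hindep_widen_cycles A B Q r v :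
  Q \notin A -> hindep A B r v -> hindep (Q |` A) B r v.
Proof. by move=> QA [cyc_v indep_v]; split=> // i; apply: cycle_on_fsetU1. Qed.

Lemma hindep_narrow_boundaries A B Q r v :
  Q \notin B -> hindep A (Q |` B) r v -> hindep A B r v.
Proof.
by move=> QB [cyc_v indep_v]; split=> // a /(boundary_on_fsetU1 QB); apply: indep_v.
Qed.

Lemma hindep_narrow_cycles A B Q r v :
  Q \notin A -> hindep (Q |` A) B r.+1 v -> exists w, hindep A B r w.
Proof.
move=> QA [cyc_v indep_v].
have [/existsP [j vjQ]|/existsPn vQ0] := boolP [exists k, v k Q != 0]; last first.
  exists (fun i => v (lift ord0 i)); apply: hindep_drop; split=> // i.
  exact: cycle_on_fsetU1_vanishing (cyc_v i) (eqP (negbNE (vQ0 i))).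
(* Use the cycle [v j] to eliminate [Q] from the supports of the others. *)
pose w i P := v j Q * v (lift j i) P + - v (lift j i) Q * v j P.
exists w; split=> [i|a bd_a i].
  apply: cycle_on_fsetU1_vanishing QA (cycle_on_lin _ _ (cyc_v _) (cyc_v _)) _.
  by rewrite mulrC mulNr addrN.
suff /(_ (lift j i)) /eqP : forall k,
    extend j (- lincomb a (fun i => v (lift j i)) Q) (fun i => a i * v j Q) k = 0.
  by rewrite extend_lift mulf_eq0 (negbTE vjQ) orbF => /eqP.
apply: indep_v; apply: boundary_on_eq bd_a => P.
rewrite lincomb_extend /lincomb /w mulNr mulr_suml -sumrN -big_split /=.
by apply: eq_bigr => k _; ring.
Qed.

Lemma hindep_widen_boundaries A B Q r v :
  Q \notin B -> hindep A B r.+1 v -> exists w, hindep A (Q |` B) r w.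
Proof.
move=> QB [cyc_v indep_v].
have [indepQ|] :=
  pselect (forall a, boundary_on (Q |` B) (lincomb a v) -> forall i, a i = 0).
  by exists (fun i => v (lift ord0 i)); apply: hindep_drop.
move=> /existsNP [a /not_implyP [bd_a /existsNP [j /eqP aj]]].
have [m [b [sb bd_ab]]] := boundary_on_fsetU1P QB bd_a.
have m0 : m != 0.
  apply/eqP => m0; move/eqP: aj; apply; apply: (indep_v _ _ j).
  exists b; split=> // P.
  by rewrite bd_ab m0 mul0r add0r.
(* A relation among the [v (lift j i)] modulo [Q |` B], combined with the
   relation [a], gives a relation among all the [v k] modulo [B]. *)
exists (fun i => v (lift j i)); split=> [i|c bd_c i]; first exact: cyc_v.
have [m' [b' [sb' bd_cb']]] := boundary_on_fsetU1P QB bd_c.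
pose e := extend j (- m' * a j) (fun i => m * c i - m' * a (lift j i)).
have lincomb_e P :
    lincomb e v P = m * lincomb c (fun i => v (lift j i)) P - m' * lincomb a v P.
  rewrite lincomb_extend /lincomb (bigD1_ord j) //= mulrDr opprD !mulr_sumr -sumrN.
  by rewrite addrCA -big_split /=; congr (_ + _); [|apply: eq_bigr => k _]; ring.
have e0 : forall k, e k = 0.
  apply: indep_v; exists (fun P => m * b' P + - m' * b P).
  split=> [|P]; first exact: supported_lin.
  by rewrite bdry_lin lincomb_e bd_cb' bd_ab; ring.
have m'0 : m' = 0.
  have /eqP := e0 j.
  by rewrite /e extend_id mulf_eq0 oppr_eq0 (negbTE aj) orbF => /eqP.
have /eqP := e0 (lift j i).
by rewrite /e extend_lift m'0 mul0r subr0 mulf_eq0 (negbTE m0) => /eqP.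
Qed.

Lemma hrank_widen_cycles A B Q :
  Q \notin A -> (hrank A B <= hrank (Q |` A) B <= (hrank A B).+1)%N.
Proof.
move=> QA; apply/andP; split.
  rewrite -[X in (_ <= X)%N]addn0; apply: leq_hrankD.
    by move=> r v _; rewrite subn0 => /(hindep_widen_cycles QA); exists v.
  by rewrite cardfsU1 QA addn0 leq_addl.
rewrite -addn1; apply: leq_hrankD; last by rewrite cardfsU1 QA addnC.
by case=> // r v _ /(hindep_narrow_cycles QA); rewrite subn1.
Qed.

Lemma hrank_widen_boundaries A B Q :
  Q \notin B -> (hrank A (Q |` B) <= hrank A B <= (hrank A (Q |` B)).+1)%N.
Proof.
move=> QB; apply/andP; split.
  rewrite -[X in (_ <= X)%N]addn0; apply: leq_hrankD; last by rewrite addn0.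
  by move=> r v _; rewrite subn0 => /(hindep_narrow_boundaries QB); exists v.
rewrite -addn1; apply: leq_hrankD; last exact: leq_addr.
by case=> // r v _ /(hindep_widen_boundaries QB); rewrite subn1.
Qed.

Definition graded (deg : T -> nat) (F : {fset T}) k := [fset P in F | deg P == k].
Definition graded_hrank deg F q := hrank (graded deg F q) (graded deg F q.+1).

Lemma graded_fsetU1 deg F Q k :
  graded deg (Q |` F) k = if deg Q == k then Q |` graded deg F k else graded deg F k.
Proof.
apply/fsetP => P; rewrite !inE; have [->|PQ] := eqVneq P Q.
  by case: ifP => Qk; rewrite !inE ?eqxx ?Qk //= andbF.
by case: ifP => _; rewrite !inE ?(negbTE PQ).
Qed.

Lemma graded_hrank_fsetU1 deg F Q q : Q \notin F ->
  `|(graded_hrank deg (Q |` F) q)%:Z - (graded_hrank deg F q)%:Z| <= 1.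
Proof.
move=> QF; rewrite /graded_hrank !graded_fsetU1.
have QFk k : Q \notin graded deg F k by rewrite !inE negb_and QF.
have [<-|Qq] := eqVneq (deg Q) q.
  rewrite (ltn_eqF (ltnSn _)).
  by have := hrank_widen_cycles (graded deg F (deg Q).+1) (QFk (deg Q)); lia.
case: ifP => _; last by rewrite subrr normr0.
by have := hrank_widen_boundaries (graded deg F q) (QFk q.+1); lia.
Qed.

End HomologyRank.

Local Open Scope ring_scope.

Lemma lipschitz_fsubset (T : choiceType) (f : {fset T} -> int) :
  (forall S Q, Q \notin S -> `|f (Q |` S)%fset - f S| <= 1) ->
  forall S U, (S `<=` U)%fset -> `|f U - f S| <= (#|` U|)%:Z - (#|` S|)%:Z.
Proof.
move=> f1 S U; have [n] := ubnP (#|` U| - #|` S|)%N.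
elim: n S => // n IH S bound SU.
have [->|] := eqVneq S U; first by rewrite !subrr normr0.
rewrite eqEfsubset SU /= => /fsubsetPn [Q QU QS].
have SU' : (Q |` S `<=` U)%fset by rewrite fsubUset fsub1set QU.
have := fsubset_leq_card SU'; have := f1 _ _ QS.
have := IH (Q |` S)%fset; rewrite cardfsU1 QS => /(_ _ SU'); lia.
Qed.

Local Open Scope classical_set_scope.

Lemma realize_lower_corner (R : realType) d (Q : cube d) :
  @realize R d Q (fun i => (Q i).1%:~R).
Proof. by move=> i; case: (Q i).2; rewrite ?lexx ?ler_int ?lerDl. Qed.

Lemma finite_cubes_in_box d (N : nat) :
  finite_set [set Q : cube d | forall i, (absz (Q i).1 <= N)%N].
Proof.
pose f (g : {ffun 'I_d -> 'I_(N + N).+1 * bool}) : cube d :=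
  [ffun i => ((g i).1%:Z - N%:Z, (g i).2)].
apply: sub_finite_set (finite_image f (@finite_finset _ setT)) => Q /= QN.
exists [ffun i => (inord (absz ((Q i).1 + N%:Z)), (Q i).2)] => //.
apply/ffunP => i; rewrite !ffunE /= inordK; have := QN i; case: (Q i) => l b /=.
  by move=> lN; congr (_, _); lia.
lia.
Qed.

Lemma bounded_cubes_finite (R : realType) d (X : set ('I_d -> R)) :
  bounded_set X -> finite_set [set Q : cube d | @realize R d Q `<=` X].
Proof.
case=> M XM; have [N MN] : exists N : nat, M < N%:R.
  by exists (Num.bound `|M|); apply: le_lt_trans (ler_norm M) (archi_boundP _).
apply: sub_finite_set (finite_cubes_in_box d N) => Q /= QX i.
rewrite -(ler_nat R) natr_absz intr_norm.
by have /= /le_trans-> := XM _ (QX _ (realize_lower_corner _ Q)) i; rewrite ?ltW.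
Qed.

Lemma cubes_of_fsubset (R : realType) d (X Y : set ('I_d -> R)) :
  bounded_set Y -> X `<=` Y -> (cubes_of X `<=` cubes_of Y)%fset.
Proof.
move=> /bounded_cubes_finite finY XY.
have finX : finite_set [set Q : cube d | @realize R d Q `<=` X].
  by apply: sub_finite_set finY => Q /= QX x /QX /XY.
apply/fsubsetP => Q; rewrite /cubes_of !in_fset_set // => /set_mem QX.
by apply/mem_set => x /QX /XY.
Qed.

Theorem lemma3p1 (R : realType) (d q : nat) (X Y : set ('I_d -> R)) :
  (q < d)%N ->
  cubical X -> cubical Y -> bounded_set X -> bounded_set Y ->
  X `<=` Y ->
  `|((betti Y q)%:Z - (betti X q)%:Z)%R| <= (ncubes Y)%:Z - (ncubes X)%:Z.
Proof.
move=> _ _ _ _ boundedY XY.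
have bettiE (Z : set ('I_d -> R)) :
    betti Z q = graded_hrank (@bcoef d) (@cdim d) (cubes_of Z) q by [].
rewrite /ncubes !bettiE.
apply: (@lipschitz_fsubset _ (fun F => (graded_hrank (@bcoef d) (@cdim d) F q)%:Z)).
  by move=> F Q; apply: graded_hrank_fsetU1.
exact: cubes_of_fsubset.
Qed.
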